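(* Let $(X_n,\|\cdot\|_n)_{n\ge1}$ be a sequence of finite dimensional real Banach spaces, each having a normalized $1$-unconditional basis, and let $(X,\|\cdot\|)$ be the space defined in the context. Then the closed unit ball $B_X$ of $X$ is compact in the topology of pointwise convergence, i.e. the coarsest topology on $X$ making each coordinate map $x=(x_n)\mapsto x_n\in X_n$ continuous. In particular, if $x_m\in X$ with $\|x_m\|\le1$ for all $m$ and $x\in X$ with $x_m\overset{p}{\to}x$, then $\|x\|\le1$.
   Context: $c_{00}((X_n))$ is the vector space of sequences $(x_1,x_2,\dots)$ with $x_k\in X_k$ and only finitely many $x_k\ne0$; $(x_1,\dots,x_n)$ denotes $(x_1,\dots,x_n,0,0,\dots)$. On $c_{00}((X_n))$ define inductively $\|(x_1)\|=\|x_1\|_1$ (the norm of $X_1$) and, for $n\ge2$, $$\|(x_1,\dots,x_n)\|=\Big(1-\tfrac{1}{n+1}\Big)\big(\|x_n\|_n+\|(x_1,\dots,x_{n-1})\|\big)+\tfrac{1}{n+1}\max\Big\{\tfrac{\|x_n\|_n}{n},\ \|(x_1,\dots,x_{n-1})\|\Big\}.$$ $X$ is the completion of $(c_{00}((X_n)),\|\cdot\|)$, identified with the space of sequences $x=(x_n)$, $x_n\in X_n$, with $\sum_n\|x_n\|_n<\infty$, where $\|x\|=\lim_k\|(x_1,\dots,x_k)\|$. For $x_m=(x_{m1},x_{m2},\dots)$ and $x=(x_1,x_2,\dots)$ in $X$, $x_m\overset{p}{\to}x$ means $\|x_{mn}-x_n\|_n\to0$ as $m\to\infty$ for every $n$.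 *)

From HB Require Import structures.
From mathcomp Require Import all_boot all_order all_algebra.
From mathcomp Require Import all_classical all_reals all_analysis.
Set Implicit Arguments. Unset Strict Implicit. Unset Printing Implicit Defensive.
Import Order.TTheory GRing.Theory Num.Theory.
Import numFieldNormedType.Exports.
Local Open Scope classical_set_scope.
Local Open Scope ring_scope.

(* Paper index n >= 1 corresponds to Rocq index n-1 : nat. *)

Definition is_basis (R : realType) (V : normedModType R) (d : nat)
    (e : 'I_d -> V) : Prop :=
  (forall v : V, exists a : 'I_d -> R, v = \sum_(i < d) a i *: e i) /\
  (forall a : 'I_d -> R, \sum_(i < d) a i *: e i = 0 -> forall i, a i = 0).

Definition normalized_basis (R : realType) (V : normedModType R) (d : nat)
    (e : 'I_d -> V) : Prop := forall i, `|e i| = 1.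

Definition one_unconditional (R : realType) (V : normedModType R) (d : nat)
    (e : 'I_d -> V) : Prop :=
  forall (a eps : 'I_d -> R), (forall i, eps i = 1 \/ eps i = -1) ->
    `|\sum_(i < d) (eps i * a i) *: e i| = `|\sum_(i < d) a i *: e i|.

(* partnorm X x k = ||(x_1, ..., x_{k+1})|| in the paper's numbering *)
Fixpoint partnorm (R : realType) (X : nat -> normedModType R)
    (x : forall n, X n) (k : nat) : R :=
  match k with
  | 0 => `|x 0%N|
  | k'.+1 =>
      let a := `|x k| in
      let b := partnorm x k' in
      (1 - 1 / (k.+2)%:R) * (a + b) + 1 / (k.+2)%:R * Num.max (a / (k.+1)%:R) b
  end.

Definition inX (R : realType) (X : nat -> normedModType R) (x : forall n, X n) : Prop :=
  cvg ([series `|x n|]_n @ \oo).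

Definition xnorm (R : realType) (X : nat -> normedModType R) (x : forall n, X n) : R :=
  lim (partnorm x @ \oo).

Definition unit_ball (R : realType) (X : nat -> normedModType R) : set (forall n, X n) :=
  [set x | inX x /\ xnorm x <= 1].
Arguments unit_ball {R} X.

From HB Require Import structures.
From mathcomp Require Import all_boot all_order all_algebra.
From mathcomp Require Import all_classical all_reals all_analysis.
From mathcomp Require Import lra.
Import Order.TTheory GRing.Theory Num.Theory.
Import numFieldNormedType.Exports.
Local Open Scope classical_set_scope.
Local Open Scope ring_scope.

(* The partial norms ||(x_1,...,x_k)|| increase with k, and each step adds at
   least half and at most all of ||x_{k+1}||.  Hence ||x|| <= 1 iff every
   partial norm is <= 1, so B_X is an intersection of sets each depending
   continuously on finitely many coordinates, i.e. closed for the pointwise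
   topology; and B_X sits inside the product of the balls of radius 2 of the
   X_n.  These balls are compact, because by 1-unconditionality the
   coordinates of a vector are bounded by its norm, so each ball is a
   continuous image of a cube.  Tychonoff's theorem concludes. *)

Lemma cvg_max (R : realFieldType) {T} (F : set_system T) {FF : Filter F}
    (f g : T -> R) (a b : R) :
  f @ F --> a -> g @ F --> b -> Num.max (f t) (g t) @[t --> F] --> Num.max a b.
Proof.
move=> fa gb; under eq_cvg do rewrite maxr_absE.
rewrite maxr_absE; apply: cvgM; last exact: cvg_cst.
by apply: cvgD; [exact: cvgD | apply: cvg_norm; exact: cvgB].
Qed.

Section PartialNorm.
Context {R : realType} {X : nat -> normedModType R}.
Implicit Types (x : forall n, X n).

Lemma partnormS x k : partnorm x k.+1 =
  (1 - 1 / (k.+3)%:R) * (`|x k.+1| + partnorm x k) +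
  1 / (k.+3)%:R * Num.max (`|x k.+1| / (k.+2)%:R) (partnorm x k).
Proof. by []. Qed.

Lemma partnormS_ge x k : partnorm x k + `|x k.+1| / 2 <= partnorm x k.+1.
Proof.
rewrite partnormS; set a := `|x k.+1|; set b := partnorm x k.
set m := Num.max _ _; set t := 1 / (k.+3)%:R.
have b_le_m : b <= m by rewrite le_max lexx orbT.
have a_ge0 : 0 <= a by exact: normr_ge0.
have t_ge0 : 0 <= t by rewrite divr_ge0.
have t_le_half : t <= 1 / 2.
  by rewrite ler_pdivrMr // mulrC mulrA mulr1 ler_pdivlMr // mul1r ler_nat.
have : t * b <= t * m by rewrite ler_wpM2l.
nra.
Qed.

Lemma partnorm_ge0 x k : 0 <= partnorm x k.
Proof.
elim: k => [|k IH]; first exact: normr_ge0.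
apply: le_trans (partnormS_ge x k).
by rewrite addr_ge0 // divr_ge0.
Qed.

Lemma partnormS_le x k : partnorm x k.+1 <= partnorm x k + `|x k.+1|.
Proof.
rewrite partnormS; set a := `|x k.+1|; set b := partnorm x k.
set t := 1 / (k.+3)%:R.
have b_ge0 : 0 <= b by exact: partnorm_ge0.
have a_ge0 : 0 <= a by exact: normr_ge0.
have max_le : Num.max (a / (k.+2)%:R) b <= a + b.
  rewrite ge_max lerDr a_ge0 andbT; apply: (@le_trans _ _ a); last by rewrite lerDl.
  by rewrite ler_pdivrMr // ler_peMr // ler1n.
have t_ge0 : 0 <= t by rewrite divr_ge0.
have : t * Num.max (a / (k.+2)%:R) b <= t * (a + b) by rewrite ler_wpM2l.
nra.
Qed.

Lemma nondecreasing_partnorm x : nondecreasing_seq (partnorm x).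
Proof.
apply/nondecreasing_seqP => k; apply: le_trans (partnormS_ge x k).
by rewrite lerDl divr_ge0.
Qed.

Let sum_norm_recr x k : \sum_(0 <= i < k.+2) `|x i| =
  \sum_(0 <= i < k.+1) `|x i| + `|x k.+1|.
Proof. by rewrite big_nat_recr. Qed.

Lemma sum_norm_le_partnorm x k :
  \sum_(0 <= i < k.+1) `|x i| <= 2 * partnorm x k.
Proof.
elim: k => [|k IH]; first by rewrite big_nat1 ler_peMl // ler1n.
rewrite sum_norm_recr; have := partnormS_ge x k; lra.
Qed.

Lemma partnorm_le_sum_norm x k : partnorm x k <= \sum_(0 <= i < k.+1) `|x i|.
Proof.
elim: k => [|k IH]; first by rewrite big_nat1.
rewrite sum_norm_recr; have := partnormS_le x k; lra.
Qed.

Lemma nondecreasing_series_norm x : nondecreasing_seq (series (fun n => `|x n|)).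
Proof. by apply: nondecreasing_series => n _ _. Qed.

Lemma unit_ballE : unit_ball X = [set x | forall k, partnorm x k <= 1].
Proof.
apply/seteqP; split => x.
  move=> [sum_cvg xnorm_le1] k.
  have partnorm_le_lim j : partnorm x j <= limn (series (fun n => `|x n|)).
    apply: le_trans (partnorm_le_sum_norm x j) _.
    exact: nondecreasing_cvgn_le (nondecreasing_series_norm x) sum_cvg j.+1.
  have partnorm_cvg : cvgn (partnorm x).
    apply: nondecreasing_is_cvgn; first exact: nondecreasing_partnorm.
    by exists (limn (series (fun n => `|x n|))) => _ [n _ <-].
  exact: le_trans (nondecreasing_cvgn_le (nondecreasing_partnorm x) partnorm_cvg k) xnorm_le1.
move=> partnorm_le1; have partnorm_cvg : cvgn (partnorm x).
  apply: nondecreasing_is_cvgn; first exact: nondecreasing_partnorm.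
  by exists 1 => _ [n _ <-].
split; last by apply: limr_le => //; exact: nearW.
apply: nondecreasing_is_cvgn; first exact: nondecreasing_series_norm.
exists 2 => _ [[|n] _ <-]; first by rewrite /series /= big_geq.
apply: le_trans (sum_norm_le_partnorm x n) _; have := partnorm_le1 n; lra.
Qed.

Lemma unit_ball_norm_le2 x n : unit_ball X x -> `|x n| <= 2.
Proof.
rewrite unit_ballE => partnorm_le1; case: n => [|k].
  by apply: le_trans (partnorm_le1 0%N) _; lra.
have := partnorm_le1 k.+1; have := partnormS_ge x k; have := partnorm_ge0 x k.
lra.
Qed.

Lemma cvg_partnorm {T} (F : set_system T) {FF : Filter F}
    (u : T -> forall n, X n) (x : forall n, X n) :
  (forall n, `|u t n| @[t --> F] --> `|x n|) ->
  forall k, partnorm (u t) k @[t --> F] --> partnorm x k.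
Proof.
move=> norm_cvg; elim=> [|k IH]; first exact: norm_cvg.
rewrite partnormS; under eq_cvg do rewrite partnormS.
apply: cvgD; apply: cvgM; try exact: cvg_cst; first exact: cvgD.
by apply: cvg_max => //; apply: cvgM => //; exact: cvg_cst.
Qed.

Lemma closed_unit_ball :
  closed (unit_ball X : set (prod_topology (fun n => (X n : topologicalType)))).
Proof.
rewrite unit_ballE.
have -> : [set x | forall k, partnorm x k <= 1] =
    \bigcap_(k in setT) ((fun x : prod_topology (fun n => (X n : topologicalType)) =>
       partnorm x k) @^-1` [set r : R | r <= 1]).
  by apply/seteqP; split => x x_le k => [_|]; exact: x_le.
apply: closed_bigI => k _; apply: preimage_closed (@closed_le R 1) => x _.
apply: (@cvg_partnorm _ (nbhs x) _ id) => n; apply: cvg_norm.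
exact: (@proj_continuous _ (fun n => (X n : topologicalType)) n x).
Qed.

Lemma unit_ball_pointwise_limit {xs : nat -> forall n, X n} {x} :
  (forall m, unit_ball X (xs m)) ->
  (forall n, (fun m => `|xs m n - x n|) @ \oo --> 0) -> unit_ball X x.
Proof.
move=> xs_ball xs_cvg; rewrite unit_ballE => k.
have coord_cvg n : xs m n @[m --> \oo] --> x n.
  by apply/subr_cvg0/norm_cvg0P; exact: xs_cvg.
have : partnorm (xs m) k @[m --> \oo] --> partnorm x k.
  by apply: (@cvg_partnorm _ \oo _ xs x) => n; exact: cvg_norm (coord_cvg n).
apply: (closed_cvg _ (@closed_le R 1)); apply: nearW => m.
by move: (xs_ball m); rewrite unit_ballE; apply.
Qed.

End PartialNorm.

Section FiniteDimensional.
Context {R : realType} {V : normedModType R} {d : nat} (e : 'I_d -> V).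

Lemma unconditional_coef_le (a : 'I_d -> R) i :
  normalized_basis e -> one_unconditional e ->
  `|a i| <= `|\sum_(j < d) a j *: e j|.
Proof.
move=> e_normed e_uncond.
pose eps j : R := if j == i then 1 else -1.
have eps_sign j : eps j = 1 \/ eps j = -1 by rewrite /eps; case: eqP; [left|right].
have flip_norm := e_uncond a eps eps_sign.
set v := \sum_(j < d) a j *: e j in flip_norm *.
set w := \sum_(j < d) (eps j * a j) *: e j in flip_norm.
have sum_flip : v + w = (a i *+ 2) *: e i.
  rewrite /v /w -big_split /= (bigD1 i) //= big1 ?addr0.
    by rewrite /eps eqxx mul1r -scalerDl mulr2n.
  by move=> j /negPf ji; rewrite /eps ji mulN1r scaleNr subrr.
have : `|(a i *+ 2) *: e i| <= `|v| + `|w| by rewrite -sum_flip ler_normD.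
rewrite normrZ e_normed mulr1 flip_norm normrMn; lra.
Qed.

Lemma compact_norm_le (r : R) :
  is_basis e -> normalized_basis e -> one_unconditional e ->
  compact [set v : V | `|v| <= r].
Proof.
move=> [e_span _] e_normed e_uncond.
pose Rd := prod_topology (fun _ : 'I_d => R).
pose f : Rd -> V := fun a => \sum_(j < d) a j *: e j.
have f_cont : continuous f.
  apply: continuous_big; first exact: add_continuous.
  move=> j _ a; apply: (@continuous_comp Rd R V (proj j) (fun c => c *: e j) a).
    exact: proj_continuous.
  exact: scalel_continuous.
pose cube := [set a : Rd | forall i, `[-r, r]%classic (a i)].
have cube_compact : compact cube.
  exact: (@tychonoff _ (fun _ : 'I_d => R) (fun _ => `[-r, r]%classic)
           (fun _ => @segment_compact R (-r) r)).
set B := [set v : V | `|v| <= r].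
have B_closed : closed B.
  by apply: preimage_closed (@closed_le R r) => ? _; exact: norm_continuous.
suff -> : B = f @` (cube `&` f @^-1` B).
  apply: continuous_compact; last first.
    apply: compact_closedI cube_compact _.
    by apply: preimage_closed B_closed => ? _; exact: f_cont.
  by apply: continuous_in_subspaceT => ? _; exact: f_cont.
apply/seteqP; split => [v v_le | _ [a [_ fa_le] <-]]; last exact: fa_le.
have [a v_eq] := e_span v.
exists a; last by rewrite /f -v_eq.
split; last by rewrite /preimage /f /= -v_eq.
move=> i /=; rewrite in_itv /= -ler_norml.
by apply: le_trans (unconditional_coef_le a i e_normed e_uncond) _; rewrite -v_eq.
Qed.

End FiniteDimensional.

Theorem proposition2p1 (R : realType) (X : nat -> normedModType R)
    (d : nat -> nat) (e : forall n, 'I_(d n) -> X n) :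
  (forall n, is_basis (e n)) ->
  (forall n, normalized_basis (e n)) ->
  (forall n, one_unconditional (e n)) ->
  compact (unit_ball X : set (prod_topology (fun n => (X n : topologicalType)))) /\
  (forall (xs : nat -> forall n, X n) (x : forall n, X n),
     (forall m, unit_ball X (xs m)) -> inX x ->
     (forall n, (fun m => `|xs m n - x n|) @ \oo --> 0) ->
     xnorm x <= 1).
Proof.
move=> e_basis e_normed e_uncond; split; last first.
  by move=> xs x xs_ball _ xs_cvg; case: (unit_ball_pointwise_limit xs_ball xs_cvg).
have balls_compact : compact [set x : prod_topology (fun n => (X n : topologicalType)) |
    forall n, [set v : X n | `|v| <= 2] (x n)].
  exact: (@tychonoff _ (fun n => (X n : topologicalType))
           (fun n => [set v : X n | `|v| <= 2])
           (fun n => compact_norm_le (e n) 2 (e_basis n) (e_normed n) (e_uncond n))).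
apply: subclosed_compact closed_unit_ball balls_compact _.
by move=> x x_ball n; exact: unit_ball_norm_le2.
Qed.
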